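(* Let $\ell\in\mathcal{D}^-[0,\infty)$, $r\in\mathcal{D}^+[0,\infty)$ with $\ell\le r$. Given any $\psi\in\mathcal{D}[0,\infty)$, there exists at most one $\phi\in\mathcal{D}[0,\infty)$ such that $(\phi,\phi-\psi)$ solves the ESP on $[\ell(\cdot),r(\cdot)]$ for $\psi$.
   Context: $\mathcal{D}[0,\infty)$ denotes the càdlàg functions $[0,\infty)\to(-\infty,\infty)$; $\mathcal{D}^-[0,\infty)$ (resp. $\mathcal{D}^+[0,\infty)$) denotes càdlàg functions with values in $[-\infty,\infty)$ (resp. $(-\infty,\infty]$). ESP: $(\phi,\eta)\in\mathcal{D}[0,\infty)^2$ solves the ESP on $[\ell(\cdot),r(\cdot)]$ for $\psi$ if (1) $\phi(t)=\psi(t)+\eta(t)\in[\ell(t),r(t)]$ for all $t\ge0$; (2) for all $0\le s\le t$: $\eta(t)-\eta(s)\ge0$ if $\phi(u)<r(u)$ for all $u\in(s,t]$, and $\eta(t)-\eta(s)\le0$ if $\phi(u)>\ell(u)$ for all $u\in(s,t]$; (3) for all $t\ge0$: $\eta(t)-\eta(t-)\ge0$ if $\phi(t)<r(t)$, and $\eta(t)-\eta(t-)\le0$ if $\phi(t)>\ell(t)$, where $\eta(0-)=0$. *)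

From HB Require Import structures.
From mathcomp Require Import all_boot all_order all_algebra.
From mathcomp Require Import all_classical all_reals all_analysis.
Set Implicit Arguments. Unset Strict Implicit. Unset Printing Implicit Defensive.
Import Order.TTheory GRing.Theory Num.Theory numFieldNormedType.Exports.
Local Open Scope classical_set_scope.
Local Open Scope ring_scope.

(* A function f : R -> T (only its restriction to [0,oo) matters) is cadlag on
   [0,oo): right-continuous at every t >= 0 and has a left limit (in T) at
   every t > 0. For T = R this is D[0,oo); for T = \bar R it is the extended
   valued version used for D^- and D^+. *)
Definition cadlag {R : realType} {T : topologicalType} (f : R -> T) : Prop :=
  (forall t : R, 0 <= t -> f x @[x --> at_right t] --> f t) /\
  (forall t : R, 0 < t -> exists l : T, f x @[x --> at_left t] --> l).

Definition cadlag_minus {R : realType} (f : R -> \bar R) : Prop :=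
  cadlag f /\ (forall t : R, 0 <= t -> f t != +oo%E).

Definition cadlag_plus {R : realType} (f : R -> \bar R) : Prop :=
  cadlag f /\ (forall t : R, 0 <= t -> f t != -oo%E).

(* left limit eta(t-) with the convention eta(0-) = 0 *)
Definition left_lim {R : realType} (eta : R -> R) (t : R) : R :=
  if (0 < t) then lim (eta x @[x --> at_left t]) else 0.

Definition ESP {R : realType} (ell r : R -> \bar R) (psi phi eta : R -> R) : Prop :=
  cadlag phi /\ cadlag eta /\
  (forall t : R, 0 <= t ->
     phi t = psi t + eta t /\ (ell t <= (phi t)%:E)%E /\ ((phi t)%:E <= r t)%E) /\
  (forall s t : R, 0 <= s -> s <= t ->
     ((forall u : R, s < u <= t -> ((phi u)%:E < r u)%E) -> 0 <= eta t - eta s) /\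
     ((forall u : R, s < u <= t -> (ell u < (phi u)%:E)%E) -> eta t - eta s <= 0)) /\
  (forall t : R, 0 <= t ->
     (((phi t)%:E < r t)%E -> 0 <= eta t - left_lim eta t) /\
     ((ell t < (phi t)%:E)%E -> eta t - left_lim eta t <= 0)).

From HB Require Import structures.
From mathcomp Require Import all_boot all_order all_algebra.
From mathcomp Require Import all_classical all_reals all_analysis.
From mathcomp Require Import lra.
Import Order.TTheory GRing.Theory Num.Theory numFieldNormedType.Exports.
Local Open Scope classical_set_scope.
Local Open Scope ring_scope.

(* Comparison principle: if (phi1, eta1) and (phi2, eta2) both solve the ESP
   for psi, then wherever phi2 < phi1 the constraints ell <= phi2 < phi1 <= r
   force eta1 to be nonincreasing and eta2 nondecreasing, so the gap
   phi1 - phi2 = eta1 - eta2 cannot become positive.  Taking the last time s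
   before a putative positive gap at which phi1 <= phi2, either the gap
   appears right after s (and is excluded by the monotonicity on (s, t]), or
   it appears at s by a jump, which the jump condition forbids since the gap
   is <= 0 just before s (and eta(0-) = 0 at s = 0). *)

Lemma left_lim_cvg {R : realType} {f : R -> R} {t : R} :
  cadlag f -> 0 < t -> f x @[x --> at_left t] --> left_lim f t.
Proof.
move=> [_ hl] t0; have [l fl] := hl t t0.
by rewrite /left_lim t0 (cvg_lim _ fl).
Qed.

Lemma cvg_at_left_le_frequently {R : realType} {f : R -> R} {s l c : R} :
  f x @[x --> at_left s] --> l ->
  (forall e, 0 < e -> exists2 u, s - e < u < s & f u <= c) -> l <= c.
Proof.
move=> fl freq; rewrite leNgt; apply/negP => cl.
have := @cvgr_gt _ _ _ (at_left_proper_filter s) _ _ fl _ cl.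
move=> /nbhs_ballP[e e0 fgt].
have [u /andP[seu us] fuc] := freq e e0.
have sue : ball s e u by rewrite /ball /= ger0_norm; lra.
by move: (fgt u sue us) => /=; rewrite ltNge fuc.
Qed.

Section ESPComparison.
Context {R : realType} {ell r : R -> \bar R} {psi phi1 phi2 eta1 eta2 : R -> R}.
Hypotheses (E1 : ESP ell r psi phi1 eta1) (E2 : ESP ell r psi phi2 eta2).

Lemma esp_gap_eta u : 0 <= u -> phi1 u - phi2 u = eta1 u - eta2 u.
Proof.
move=> u0; have [-> _] := E1.2.2.1 u u0; have [-> _] := E2.2.2.1 u u0.
by rewrite opprD addrACA subrr add0r.
Qed.

Lemma esp_gap_bounds u : 0 <= u -> phi2 u < phi1 u ->
  (ell u < (phi1 u)%:E)%E /\ ((phi2 u)%:E < r u)%E.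
Proof.
move=> u0 gap; have [_ [ell2 _]] := E2.2.2.1 u u0; have [_ [_ r1]] := E1.2.2.1 u u0.
by split; [apply: le_lt_trans ell2 _ | apply: lt_le_trans r1]; rewrite lte_fin.
Qed.

Lemma esp_gap_nonincreasing s t : 0 <= s -> s <= t ->
  (forall u, s < u <= t -> phi2 u < phi1 u) ->
  eta1 t - eta2 t <= eta1 s - eta2 s.
Proof.
move=> s0 st gap.
have bnd u : s < u <= t -> (ell u < (phi1 u)%:E)%E /\ ((phi2 u)%:E < r u)%E.
  by move=> /[dup] /andP[su _] /gap; apply: esp_gap_bounds; rewrite (le_trans s0) ?ltW.
have := (E1.2.2.2.1 s t s0 st).2 (fun u su => (bnd u su).1).
have := (E2.2.2.2.1 s t s0 st).1 (fun u su => (bnd u su).2).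
lra.
Qed.

Lemma esp_gap_jump t : 0 <= t -> phi2 t < phi1 t ->
  eta1 t - eta2 t <= left_lim eta1 t - left_lim eta2 t.
Proof.
move=> t0 /(esp_gap_bounds _ t0)[ell1 r2].
have := (E1.2.2.2.2 t t0).2 ell1; have := (E2.2.2.2.2 t t0).1 r2.
lra.
Qed.

Lemma esp_le_at0 : phi1 0 <= phi2 0.
Proof.
rewrite leNgt; apply/negP => gap.
have := esp_gap_jump _ (lexx 0) gap; rewrite /left_lim ltxx -esp_gap_eta //.
lra.
Qed.

Lemma esp_le t : 0 <= t -> phi1 t <= phi2 t.
Proof.
move=> t0; rewrite leNgt; apply/negP => gapt.
pose A := [set u | 0 <= u <= t /\ phi1 u <= phi2 u].
have A0 : A 0 by split; [rewrite lexx t0 | exact: esp_le_at0].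
have supA : has_sup A by split; [exists 0 | exists t => u [/andP[_]]].
pose s := sup A.
have s0 : 0 <= s by apply: sup_upper_bound.
have st : s <= t by apply: ge_sup; [exists 0 | move=> u [/andP[_]]].
have gap_after u : s < u <= t -> phi2 u < phi1 u.
  move=> /andP[su ut]; rewrite ltNge; apply/negP => le12.
  suff : u <= s by rewrite leNgt su.
  by apply: sup_upper_bound => //; split=> //; rewrite ut (le_trans s0 (ltW su)).
have [les|gaps] := lerP (phi1 s) (phi2 s).
  have := esp_gap_nonincreasing _ _ s0 st gap_after.
  by rewrite -!esp_gap_eta //; lra.
have sp : 0 < s by rewrite lt_neqAle s0 andbT; apply: contraTneq gaps => <-; rewrite -leNgt A0.2.
have : left_lim eta1 s - left_lim eta2 s <= 0.
  have gap_lim := @cvgB _ _ _ _ (at_left_proper_filter s) _ _ _ _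
    (left_lim_cvg E1.2.1 sp) (left_lim_cvg E2.2.1 sp).
  apply: (cvg_at_left_le_frequently gap_lim) => e e0.
  have [u Au seu] := sup_adherent e0 supA.
  have us : u < s.
    rewrite lt_neqAle sup_upper_bound // andbT.
    by apply: contraTneq gaps => <-; rewrite -leNgt Au.2.
  exists u; first by rewrite us andbT; exact: seu.
  have [/andP[u0 _] le12] := Au.
  by rewrite /= -esp_gap_eta // subr_le0.
have := esp_gap_jump _ s0 gaps; rewrite -esp_gap_eta //; move: gaps; lra.
Qed.

End ESPComparison.

Theorem proposition2p8 (R : realType) (ell r : R -> \bar R) (psi : R -> R) :
  cadlag_minus ell -> cadlag_plus r ->
  (forall t : R, 0 <= t -> (ell t <= r t)%E) ->
  cadlag psi ->
  forall phi1 phi2 : R -> R,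
    cadlag phi1 -> ESP ell r psi phi1 (fun t => phi1 t - psi t) ->
    cadlag phi2 -> ESP ell r psi phi2 (fun t => phi2 t - psi t) ->
    forall t : R, 0 <= t -> phi1 t = phi2 t.
Proof.
move=> _ _ _ _ phi1 phi2 _ E1 _ E2 t t0.
by apply: le_anti; rewrite (esp_le E1 E2 t t0) (esp_le E2 E1 t t0).
Qed.
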